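(* Let $n\ge1$, $1\le\ell\le n$, and let $\widetilde{\mathbf k}=(\widetilde k_{ji})_{1\le i\le j\le n+1}$ be a tuple of non-negative integers. Then, in $\mathsf{Ch}_n$, $$\mathfrak C_{\widetilde{\mathbf k}}(a_1,\dots,a_\ell,a_\ell,a_{\ell+1},\dots,a_n)=\mathfrak C_{\mathbf k}(a_1,\dots,a_n),$$ where $\mathbf k=(k_{ji})_{1\le i\le j\le n}$ is given by $$k_{ji}=\begin{cases}\widetilde k_{ji}& \text{if } j<\ell,\\ \widetilde k_{\ell i}+\widetilde k_{(\ell+1)i}&\text{if } j=\ell>i,\\ \widetilde k_{\ell\ell}+2\widetilde k_{(\ell+1)\ell}+\widetilde k_{(\ell+1)(\ell+1)}&\text{if } j=i=\ell,\\ \widetilde k_{(j+1)i}&\text{if } j>\ell>i,\\ \widetilde k_{(j+1)\ell}+\widetilde k_{(j+1)(\ell+1)}&\text{if } j>i=\ell,\\ \widetilde k_{(j+1)(i+1)}&\text{if } j,i>\ell.\end{cases}$$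
   Context: The Chinese monoid of rank $m$ is $\mathsf{Ch}_m=\langle a_1,\dots,a_m\rangle$ with relations $a_ja_ka_i=a_ka_ja_i=a_ka_ia_j$ for all $1\le i\le j\le k\le m$. For a tuple $\mathbf k=(k_{ji})_{1\le i\le j\le m}$ of non-negative integers and elements $x_1,\dots,x_m$ of a monoid, the canonical-form word is $\mathfrak C_{\mathbf k}(x_1,\dots,x_m)=b_1b_2\cdots b_m$ where $b_j=(x_jx_1)^{k_{j1}}(x_jx_2)^{k_{j2}}\cdots(x_jx_{j-1})^{k_{j(j-1)}}x_j^{k_{jj}}$ (so $b_1=x_1^{k_{11}}$). Every element of $\mathsf{Ch}_m$ equals $\mathfrak C_{\mathbf k}(a_1,\dots,a_m)$ for a unique such tuple $\mathbf k$ (the canonical form). In the left-hand side above, the word $\mathfrak C_{\widetilde{\mathbf k}}$ in $n+1$ variables is evaluated at the $n+1$ elements $a_1,\dots,a_\ell,a_\ell,a_{\ell+1},\dots,a_n$ of $\mathsf{Ch}_n$ (the generator $a_\ell$ repeated). *)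

From mathcomp Require Import all_boot.
Set Implicit Arguments. Unset Strict Implicit. Unset Printing Implicit Defensive.

(* Words over the alphabet of generators: the letter t stands for a_t
   (generators of Ch_n are the letters 1..n). *)
Definition word := seq nat.

Inductive chstep (n : nat) : word -> word -> Prop :=
| chstep1 (u v : word) (i j k : nat) :
    1 <= i -> i <= j -> j <= k -> k <= n ->
    chstep n (u ++ [:: j; k; i] ++ v) (u ++ [:: k; j; i] ++ v)
| chstep2 (u v : word) (i j k : nat) :
    1 <= i -> i <= j -> j <= k -> k <= n ->
    chstep n (u ++ [:: k; j; i] ++ v) (u ++ [:: k; i; j] ++ v).

Inductive chin_eq (n : nat) : word -> word -> Prop :=
| chin_refl w : chin_eq n w w
| chin_step w1 w2 : chstep n w1 w2 -> chin_eq n w1 w2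
| chin_sym w1 w2 : chin_eq n w1 w2 -> chin_eq n w2 w1
| chin_trans w1 w2 w3 : chin_eq n w1 w2 -> chin_eq n w2 w3 -> chin_eq n w1 w3.

Definition wpow (w : word) (e : nat) : word := flatten (nseq e w).

Definition cblock (k : nat -> nat -> nat) (x : nat -> word) (j : nat) : word :=
  flatten [seq wpow (x j ++ x i) (k j i) | i <- iota 1 j.-1] ++ wpow (x j) (k j j).

(* C_k(x_1,...,x_m) = b_1 b_2 ... b_m ; the tuple k is given as a function,
   only its values k j i with 1 <= i <= j <= m are used. *)
Definition cform (m : nat) (k : nat -> nat -> nat) (x : nat -> word) : word :=
  flatten [seq cblock k x j | j <- iota 1 m].

Definition kmerge (l : nat) (kt : nat -> nat -> nat) (j i : nat) : nat :=
  if j < l then kt j i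
  else if j == l then
    (if i < l then kt l i + kt l.+1 i
     else kt l l + 2 * kt l.+1 l + kt l.+1 l.+1)
  else
    (if i < l then kt j.+1 i
     else if i == l then kt j.+1 l + kt j.+1 l.+1
     else kt j.+1 i.+1).

(* The sequence of n+1 letters a_1,...,a_l,a_l,a_{l+1},...,a_n (indices 1..n+1). *)
Definition dupgen (l : nat) (t : nat) : word := [:: if t <= l then t else t.-1].

From mathcomp Require Import all_boot zify.
Set Implicit Arguments. Unset Strict Implicit. Unset Printing Implicit Defensive.

(* The blocks b_j with j < l are literally unchanged.  A block b_(j+1) with
   j > l becomes b_j once its two factors (a_j a_l)^(k~_(j+1)l) and
   (a_j a_l)^(k~_(j+1)(l+1)) are fused.  Only b_l b_(l+1), where the repeated
   letter a_l plays the role of both x_l and x_(l+1), needs the relations: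
   a_l commutes with every a_l a_i and the words a_l a_i, a_l a_i' commute
   for i, i' <= l, so the factors of b_(l+1) slide into b_l and coalesce. *)

Definition powprod (T : Type) (f : T -> word) (e : T -> nat) (s : seq T) : word :=
  flatten [seq wpow (f i) (e i) | i <- s].

Lemma wpowD w a b : wpow w (a + b) = wpow w a ++ wpow w b.
Proof. by rewrite /wpow nseqD flatten_cat. Qed.

Lemma wpowM w a b : wpow w (a * b) = wpow (wpow w a) b.
Proof. by elim: b => [|b IH]; rewrite ?muln0 // mulnS wpowD IH. Qed.

Lemma powprod_cons (T : Type) (f : T -> word) e a s :
  powprod f e (a :: s) = wpow (f a) (e a) ++ powprod f e s.
Proof. by []. Qed.

Lemma powprod_cat (T : Type) (f : T -> word) e s1 s2 :
  powprod f e (s1 ++ s2) = powprod f e s1 ++ powprod f e s2.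
Proof. by rewrite /powprod map_cat flatten_cat. Qed.

Lemma powprod_map (S T : Type) (f : T -> word) e (g : S -> T) s :
  powprod f e (map g s) = powprod (f \o g) (e \o g) s.
Proof. by rewrite /powprod -map_comp. Qed.

Lemma eq_in_powprod (T : eqType) (f g : T -> word) (e e' : T -> nat) s :
  {in s, f =1 g} -> {in s, e =1 e'} -> powprod f e s = powprod g e' s.
Proof.
by move=> fg ee'; congr flatten; apply/eq_in_map => i si; rewrite fg ?ee'.
Qed.

Lemma cblockE k x j :
  cblock k x j = powprod (fun i => x j ++ x i) (k j) (iota 1 j.-1) ++ wpow (x j) (k j j).
Proof. by []. Qed.

Lemma iota1_split l m : 0 < l -> iota 1 (l + m) = iota 1 l.-1 ++ l :: iota l.+1 m.
Proof. by move=> l0; rewrite -(prednK l0) addSnnS iotaD add1n. Qed.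

Section ChineseCongruence.

Variable n : nat.

Lemma chstep_cat p s w1 w2 : chstep n w1 w2 -> chstep n (p ++ w1 ++ s) (p ++ w2 ++ s).
Proof.
case=> u v i j k i1 ij jk kn; rewrite -!catA.
  by move: (chstep1 (p ++ u) (v ++ s) i1 ij jk kn); rewrite -!catA.
by move: (chstep2 (p ++ u) (v ++ s) i1 ij jk kn); rewrite -!catA.
Qed.

Lemma chin_eq_ctx p s w1 w2 :
  chin_eq n w1 w2 -> chin_eq n (p ++ w1 ++ s) (p ++ w2 ++ s).
Proof.
elim=> [w | ? ? /(chstep_cat p s) | ? ? _ | ? ? ? _ IH12 _ IH23].
- exact: chin_refl.
- exact: chin_step.
- exact: chin_sym.
- exact: chin_trans IH12 IH23.
Qed.

Lemma chin_eq_cat u u' v v' :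
  chin_eq n u u' -> chin_eq n v v' -> chin_eq n (u ++ v) (u' ++ v').
Proof.
move=> /(chin_eq_ctx [::] v) eq_u /(chin_eq_ctx u' [::]); rewrite !cats0 => eq_v.
exact: chin_trans eq_u eq_v.
Qed.

Definition chin_comm u v := chin_eq n (u ++ v) (v ++ u).

Lemma chin_comm_sym u v : chin_comm u v -> chin_comm v u.
Proof. exact: chin_sym. Qed.

Lemma chin_eq_swap p s u v :
  chin_comm u v -> chin_eq n (p ++ u ++ v ++ s) (p ++ v ++ u ++ s).
Proof. by move=> /(chin_eq_ctx p s); rewrite -!catA. Qed.

Lemma chin_comm_flattenl ws w :
  {in ws, forall u, chin_comm u w} -> chin_comm (flatten ws) w.
Proof.
elim: ws => [|u ws IH] ws_w /=.
  by rewrite /chin_comm cats0; apply: chin_refl.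
rewrite /chin_comm -catA; apply: chin_trans (chin_eq_cat (chin_refl n u) (IH _)) _.
  by move=> v v_ws; apply: ws_w; rewrite inE v_ws orbT.
by rewrite !catA; apply: chin_eq_cat (ws_w u (mem_head u ws)) (chin_refl n _).
Qed.

Lemma chin_comm_wpow u v a b : chin_comm u v -> chin_comm (wpow u a) (wpow v b).
Proof.
have wpowl u' w e : chin_comm u' w -> chin_comm (wpow u' e) w.
  by move=> u'w; apply: chin_comm_flattenl => _ /nseqP[-> _].
by move=> uv; apply/wpowl/chin_comm_sym/wpowl/chin_comm_sym.
Qed.

Lemma powprod_merge (T : eqType) (f : T -> word) e e' s :
  {in s &, forall i j, chin_comm (f i) (f j)} ->
  chin_eq n (powprod f e s ++ powprod f e' s) (powprod f (fun i => e i + e' i) s).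
Proof.
elim: s => [|a s IH] comm_s; first exact: chin_refl.
have comm_s' : {in s &, forall i j, chin_comm (f i) (f j)}.
  by move=> i j si sj; apply: comm_s; rewrite inE ?si ?sj orbT.
have comm_a : chin_comm (powprod f e s) (wpow (f a) (e' a)).
  apply: chin_comm_flattenl => _ /mapP[i si ->]; apply: chin_comm_wpow.
  by apply: comm_s; rewrite inE ?si ?eqxx ?orbT.
rewrite !powprod_cons wpowD -!catA.
apply: chin_trans (chin_eq_swap _ _ comm_a) _.
exact: chin_eq_cat (chin_refl n _) (chin_eq_cat (chin_refl n _) (IH comm_s')).
Qed.

Lemma chin_comm_letter_pair l i :
  0 < i -> i <= l -> l <= n -> chin_comm [:: l] [:: l; i].
Proof. by move=> i0 il ln; apply/chin_step/(chstep2 [::] [::] i0 il (leqnn l) ln). Qed.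

Lemma chin_comm_pairs l i i' :
  0 < i -> 0 < i' -> i <= l -> i' <= l -> l <= n -> chin_comm [:: l; i'] [:: l; i].
Proof.
wlog ii' : i i' / i <= i'.
  move=> wlog_ii' i0 i'0 il i'l ln; have [ii'|/ltnW i'i] := leqP i i'; first exact: wlog_ii'.
  exact/chin_comm_sym/wlog_ii'.
move=> i0 _ _ i'l ln.
apply: chin_trans (chin_step (chstep1 [:: l] [::] i0 ii' i'l ln)) _.
apply: chin_trans (chin_step (chstep2 [:: l] [::] i0 ii' i'l ln)) _.
exact/chin_step/(chstep2 [::] [:: i'] i0 (leq_trans ii' i'l) (leqnn l) ln).
Qed.

End ChineseCongruence.

Local Notation gens := (fun t : nat => [:: t]).

Lemma dupgen_le l t : t <= l -> dupgen l t = [:: t].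
Proof. by rewrite /dupgen => ->. Qed.

Lemma dupgen_gt l t : l < t -> dupgen l t = [:: t.-1].
Proof. by move=> lt; rewrite /dupgen leqNgt lt. Qed.

Lemma cblock_dupgen_lt l kt j :
  j < l -> cblock kt (dupgen l) j = cblock (kmerge l kt) gens j.
Proof.
move=> jl; rewrite !cblockE /kmerge jl dupgen_le ?(ltnW jl) //; congr (_ ++ _).
by apply: eq_in_powprod => // i; rewrite mem_iota => ij; rewrite dupgen_le //; lia.
Qed.

Lemma cblock_dupgen_gt l kt j :
  0 < l < j -> cblock kt (dupgen l) j.+1 = cblock (kmerge l kt) gens j.
Proof.
move=> /andP[l0 lj]; set s := iota 1 l.-1; set d := j - l.+1.
have iota_j : iota 1 j = s ++ [:: l, l.+1 & iota l.+2 d].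
  by rewrite -[in LHS](_ : l + d.+1 = j) ?iota1_split //; lia.
have iota_j1 : iota 1 j.-1 = s ++ l :: iota l.+1 d.
  by rewrite -[in LHS](_ : l + d = j.-1) ?iota1_split //; lia.
have [jl jl'] : (j < l) = false /\ (j == l) = false by lia.
rewrite !cblockE /= iota_j iota_j1 !powprod_cat !powprod_cons.
rewrite (dupgen_gt (leqW lj)) (dupgen_le (leqnn l)) (dupgen_gt (ltnSn l)).
rewrite -[l.+2]/(1 + l.+1) iotaDl !powprod_map /kmerge jl jl' ltnn eqxx wpowD -!catA /=.
congr (_ ++ _ ++ _ ++ _ ++ _); apply: eq_in_powprod => i; rewrite mem_iota => i_range.
- by rewrite dupgen_le //; lia.
- by have -> : i < l by lia.
- by rewrite /= add1n dupgen_gt //; lia.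
- have [il il'] : (i < l) = false /\ (i == l) = false by lia.
  by rewrite /= add1n il il'.
Qed.

Lemma cblock_dupgen_merge n l kt : 0 < l -> l <= n ->
  chin_eq n (cblock kt (dupgen l) l ++ cblock kt (dupgen l) l.+1)
            (cblock (kmerge l kt) gens l).
Proof.
move=> l0 ln; set s := iota 1 l.-1; set pair := fun i => [:: l; i].
have s_lt i : i \in s -> 0 < i < l by rewrite mem_iota; lia.
have dup_s f : {in s, (fun i => f ++ dupgen l i) =1 (fun i => f ++ [:: i])}.
  by move=> i /s_lt /andP[_ /ltnW il]; rewrite dupgen_le.
have -> : cblock kt (dupgen l) l = powprod pair (kt l) s ++ wpow [:: l] (kt l l).
  by rewrite cblockE dupgen_le // (eq_in_powprod (dup_s _) (in1W (frefl _))).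
have -> : cblock kt (dupgen l) l.+1 =
    powprod pair (kt l.+1) s ++ wpow [:: l] (2 * kt l.+1 l) ++ wpow [:: l] (kt l.+1 l.+1).
  rewrite cblockE (dupgen_gt (ltnSn l)) succnK -[l in iota 1 l]addn0 iota1_split //.
  rewrite powprod_cat powprod_cons (dupgen_le (leqnn l)).
  by rewrite (eq_in_powprod (dup_s _) (in1W (frefl _))) wpowM -!catA.
have -> : cblock (kmerge l kt) gens l =
    powprod pair (fun i => kt l i + kt l.+1 i) s
    ++ wpow [:: l] (kt l l + 2 * kt l.+1 l + kt l.+1 l.+1).
  rewrite cblockE {2}/kmerge ltnn eqxx; congr (_ ++ _).
  by apply: eq_in_powprod => // i /s_lt /andP[_ il]; rewrite /kmerge ltnn eqxx il.
have l_pairs : chin_comm n (wpow [:: l] (kt l l)) (powprod pair (kt l.+1) s).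
  apply/chin_comm_sym/chin_comm_flattenl => _ /mapP[i /s_lt /andP[i0 /ltnW il] ->].
  exact/chin_comm_sym/chin_comm_wpow/chin_comm_letter_pair.
rewrite -!catA; apply: chin_trans (chin_eq_swap _ _ l_pairs) _.
rewrite -!wpowD addnA catA; apply: chin_eq_cat (powprod_merge _ _ _) (chin_refl n _).
move=> i j /s_lt /andP[i0 /ltnW il] /s_lt /andP[j0 /ltnW jl].
exact: chin_comm_pairs.
Qed.

Theorem lemma1p4 (n l : nat) (kt : nat -> nat -> nat) :
  1 <= n -> 1 <= l -> l <= n ->
  chin_eq n (cform n.+1 kt (dupgen l)) (cform n (kmerge l kt) (fun t => [:: t])).
Proof.
move=> _ l0 ln.
have iota_n1 : iota 1 n.+1 = iota 1 l.-1 ++ [:: l, l.+1 & iota l.+2 (n - l)].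
  by rewrite -[in LHS](subnKC (leqW ln)) subSn // iota1_split.
have iota_n : iota 1 n = iota 1 l.-1 ++ l :: iota l.+1 (n - l).
  by rewrite -[in LHS](subnKC ln) iota1_split.
have below : map (cblock kt (dupgen l)) (iota 1 l.-1)
    = map (cblock (kmerge l kt) gens) (iota 1 l.-1).
  by apply/eq_in_map => j; rewrite mem_iota => jl; apply: cblock_dupgen_lt; lia.
have above : map (cblock kt (dupgen l)) (iota l.+2 (n - l))
    = map (cblock (kmerge l kt) gens) (iota l.+1 (n - l)).
  rewrite -[l.+2]/(1 + l.+1) iotaDl -map_comp.
  by apply/eq_in_map => j; rewrite mem_iota => lj; apply: cblock_dupgen_gt; lia.
rewrite /cform iota_n1 iota_n !map_cat !flatten_cat below /= above.
apply: chin_eq_cat (chin_refl n _) _; rewrite catA.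
exact: chin_eq_cat (cblock_dupgen_merge _ _ _) (chin_refl n _).
Qed.
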